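(* Let $t\ge1$ and let $h:\{0,1\}^t\times\{0,1\}^t\to\{0,1\}$ be a Boolean function with $\mathrm{Cov}_0(h)=c$ and $\mathrm{UCov}_1(h)=m$. Then there exists a graph $G$ on at most $2^{2t}$ vertices with $\mathrm{bp}(G)\le m^2$ and $\chi(G)\ge\sqrt{c}$.
   Context: A $b$-monochromatic rectangle for $h$ is a set $A\times B$ with $A,B\subseteq\{0,1\}^t$ on which $h\equiv b$. $\mathrm{Cov}_b(h)$ is the minimum number of $b$-monochromatic rectangles covering $h^{-1}(b)$; $\mathrm{UCov}_b(h)$ is the minimum number of pairwise disjoint $b$-monochromatic rectangles partitioning $h^{-1}(b)$. For a graph $G$, $\chi(G)$ is the chromatic number and $\mathrm{bp}(G)$ is the minimum number of bicliques (complete bipartite subgraphs) whose edge sets partition $E(G)$. *)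

From mathcomp Require Import all_boot.
Set Implicit Arguments. Unset Strict Implicit. Unset Printing Implicit Defensive.

Definition cube (t : nat) := (t.-tuple bool)%type.

Section Communication.
Variable t : nat.
Variable h : cube t -> cube t -> bool.

Definition rect (R : {set cube t} * {set cube t}) : {set cube t * cube t} :=
  setX R.1 R.2.

Definition mono_rect (b : bool) (R : {set cube t} * {set cube t}) : bool :=
  [forall x in R.1, forall y in R.2, h x y == b].

Definition preim (b : bool) : {set cube t * cube t} := [set p | h p.1 p.2 == b].

Definition cover_of (b : bool) (k : nat)
    (F : {ffun 'I_k -> {set cube t} * {set cube t}}) : bool :=
  [forall i, mono_rect b (F i)] && (preim b \subset \bigcup_i rect (F i)).

Definition ucover_of (b : bool) (k : nat)
    (F : {ffun 'I_k -> {set cube t} * {set cube t}}) : bool :=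
  cover_of b F && [forall i, forall j, (i != j) ==> [disjoint rect (F i) & rect (F j)]].

Definition coverable (b : bool) (k : nat) : bool :=
  [exists F : {ffun 'I_k -> {set cube t} * {set cube t}}, cover_of b F].
Definition ucoverable (b : bool) (k : nat) : bool :=
  [exists F : {ffun 'I_k -> {set cube t} * {set cube t}}, ucover_of b F].

Lemma ucoverable_ex (b : bool) : exists k, ucoverable b k.
Proof.
exists #|{: cube t * cube t}|; apply/existsP.
pose F := [ffun i : 'I_#|{: cube t * cube t}| =>
  let p := enum_val i in
  if h p.1 p.2 == b then ([set p.1], [set p.2]) else (set0, set0)].
have rF i : rect (F i) = if h (enum_val i).1 (enum_val i).2 == b
                          then [set enum_val i] else set0.
  rewrite /rect ffunE /=; case: (h _ _ == b) => /=.
    apply/setP => -[x y]; rewrite !inE /=.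
    by case: (enum_val i) => a c.
  by apply/setP => -[x y]; rewrite !inE.
exists F; apply/andP; split; first (apply/andP; split).
- apply/forallP => i; apply/forall_inP => x xi; apply/forall_inP => y yi.
  move: xi yi; rewrite ffunE /=; case: eqP => hb /=; last by rewrite inE.
  by rewrite !inE => /eqP -> /eqP ->; apply/eqP.
- apply/subsetP => p; rewrite inE => hp; apply/bigcupP.
  exists (enum_rank p) => //; rewrite rF enum_rankK hp; exact: set11.
- apply/forallP => i; apply/forallP => j; apply/implyP => ij.
  rewrite !rF; case: (_ == b); last by rewrite -setI_eq0 set0I.
  case: (_ == b); last by rewrite -setI_eq0 setI0.
  rewrite disjoints1 inE; apply: contra ij => /eqP e.
  by apply/eqP/enum_val_inj.
Qed.

Lemma coverable_ex (b : bool) : exists k, coverable b k.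
Proof.
have [k /existsP [F /andP [H _]]] := ucoverable_ex b.
by exists k; apply/existsP; exists F.
Qed.

Definition Cov (b : bool) : nat := ex_minn (coverable_ex b).
Definition UCov (b : bool) : nat := ex_minn (ucoverable_ex b).

End Communication.

Record graph (n : nat) := Graph {
  adj : rel 'I_n;
  adj_sym : symmetric adj;
  adj_irr : irreflexive adj }.

Section GraphParams.
Variables (n : nat) (G : graph n).

Definition proper_col (k : nat) (f : {ffun 'I_n -> 'I_k}) : bool :=
  [forall u, forall v, adj G u v ==> (f u != f v)].
Definition colorable (k : nat) : bool :=
  [exists f : {ffun 'I_n -> 'I_k}, proper_col f].

Lemma colorable_ex : exists k, colorable k.
Proof.
exists n; apply/existsP; exists [ffun u => u].
apply/forallP => u; apply/forallP => v; apply/implyP => e; rewrite !ffunE.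
by apply: contraTneq e => ->; rewrite adj_irr.
Qed.

Definition chi : nat := ex_minn colorable_ex.

Definition biclique (R : {set 'I_n} * {set 'I_n}) : bool :=
  [disjoint R.1 & R.2] && [forall x in R.1, forall y in R.2, adj G x y].
Definition in_bic (R : {set 'I_n} * {set 'I_n}) (u v : 'I_n) : bool :=
  ((u \in R.1) && (v \in R.2)) || ((u \in R.2) && (v \in R.1)).

Definition bp_partition (k : nat) (F : {ffun 'I_k -> {set 'I_n} * {set 'I_n}}) : bool :=
  [forall i, biclique (F i)] &&
  [forall u, forall v, adj G u v ==> (#|[set i | in_bic (F i) u v]| == 1)].
Definition bp_partitionable (k : nat) : bool :=
  [exists F : {ffun 'I_k -> {set 'I_n} * {set 'I_n}}, bp_partition F].

Lemma bp_partitionable_ex : exists k, bp_partitionable k.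
Proof.
exists #|{: 'I_n * 'I_n}|; apply/existsP.
pose F := [ffun i : 'I_#|{: 'I_n * 'I_n}| =>
  let p := enum_val i in
  if adj G p.1 p.2 && (p.1 < p.2) then ([set p.1], [set p.2]) else (set0, set0)].
exists F; apply/andP; split.
  apply/forallP => i; rewrite /biclique ffunE /=.
  case E: (adj G _ _ && _) => /=; last first.
    by rewrite -setI_eq0 set0I eqxx; apply/forall_inP => x; rewrite inE.
  case/andP: E => e lt.
  apply/andP; split.
    rewrite disjoints1 inE; apply/negP => /eqP E; by rewrite E ltnn in lt.
  by apply/forall_inP => x /set1P ->; apply/forall_inP => y /set1P ->.
apply/forallP => u; apply/forallP => v; apply/implyP => e.
wlog uv : u v e / u < v.
  move=> W; case: (ltngtP u v) => [uv|vu|uv]; first exact: W.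
  - have -> : [set i | in_bic (F i) u v] = [set i | in_bic (F i) v u].
      apply/setP => i; rewrite !inE /in_bic; case: (F i) => X Y /=.
      by case: (u \in X) (u \in Y) (v \in X) (v \in Y) => [] [] [] [].
    by apply: W => //; rewrite adj_sym.
  - by move/val_inj: uv e => ->; rewrite adj_irr.
apply/cards1P; exists (enum_rank (u, v)); apply/setP => i; rewrite !inE.
rewrite /in_bic ffunE /=.
case nE: (adj G _ _ && _) => /=; last first.
  rewrite !inE /=; apply/esym/negP => /eqP E.
  by move: nE; rewrite E enum_rankK /= e uv.
case/andP: nE => e' lt.
rewrite !inE; apply/idP/idP.
    case/orP => /andP [/eqP eu /eqP ev].
      by apply/eqP; apply: enum_val_inj; rewrite enum_rankK; case: (enum_val i) eu ev => /= a b -> ->.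
    by move: lt; rewrite -eu -ev => lt; have := ltn_trans uv lt; rewrite ltnn.
  move=> /eqP ->; rewrite enum_rankK /=; by rewrite !eqxx.
Qed.

Definition bp : nat := ex_minn bp_partitionable_ex.

End GraphParams.

(* Fix a partition of h^{-1}(1) into m 1-rectangles. Two 0-entries u = (u1, u2) and
   v = (v1, v2) meet in the crossed entries (u1, v2) and (v1, u2). In G_and they are
   adjacent when both crossed entries are 1; the pair of rectangles containing them
   determines the edge, so m^2 bicliques partition E(G_and). Inside a colour class a
   of G_and at most one crossed entry is 1, so in G_or(a), which joins vertices of
   class a having some crossed entry equal to 1, the rectangle containing that entry
   determines the edge and m bicliques suffice. Refining a colouring of G_and by
   colourings of the G_or(a) gives classes whose crossed entries are all 0, that is
   0-rectangles, so c <= chi(G_and) * max_a chi(G_or(a)) and one of these graphs has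
   chi^2 >= c. *)
From Pilot Require Import Defs.
From mathcomp Require Import all_boot.

Set Implicit Arguments. Unset Strict Implicit. Unset Printing Implicit Defensive.

Lemma chi_coloring n (G : graph n) : exists f, @proper_col n G (chi G) f.
Proof. by apply/existsP; rewrite /chi; case: ex_minnP. Qed.

Lemma bp_le n (G : graph n) k : bp_partitionable G k -> bp G <= k.
Proof. by rewrite /bp; case: ex_minnP => k' _; apply. Qed.

Lemma Cov_le t (h : cube t -> cube t -> bool) b k : coverable h b k -> Cov h b <= k.
Proof. by rewrite /Cov; case: ex_minnP => k' _; apply. Qed.

Lemma UCov_ucoverable t (h : cube t -> cube t -> bool) b : ucoverable h b (UCov h b).
Proof. by rewrite /UCov; case: ex_minnP. Qed.

Lemma card_cube_pairs t : #|{: cube t * cube t}| = 2 ^ (2 * t).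
Proof. by rewrite card_prod card_tuple card_bool -expnD addnn -mul2n. Qed.

Lemma card_sorted_pair m (i j : 'I_m) : i != j ->
  #|[set k : 'I_m * 'I_m | (k.1 < k.2) && ((k == (i, j)) || (k == (j, i)))]| = 1.
Proof.
wlog ij : i j / i < j => [W|_].
  case: (ltngtP i j) => [ij|ji _|/val_inj->]; [exact: W| |by rewrite eqxx].
  under eq_finset => k do rewrite orbC.
  by apply: W; rewrite ?neq_ltn ji ?orbT.
apply/eqP/cards1P; exists (i, j); apply/setP => -[p q]; rewrite !inE !xpair_eqE /=.
apply/idP/idP => [/andP [pq /orP [//|/andP [/eqP pj /eqP qi]]]|/andP [/eqP-> /eqP->]].
  by move: pq; rewrite pj qi ltnNge ltnW.
by rewrite ij !eqxx.
Qed.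

Section GraphOfRel.
Variables (T : finType) (r : rel T).
Hypotheses (r_sym : symmetric r) (r_irr : irreflexive r).

Definition rel_adj : rel 'I_#|T| := fun i j => r (enum_val i) (enum_val j).

Lemma rel_adj_sym : symmetric rel_adj.
Proof. by move=> i j; rewrite /rel_adj r_sym. Qed.

Lemma rel_adj_irr : irreflexive rel_adj.
Proof. by move=> i; rewrite /rel_adj r_irr. Qed.

Definition graph_of_rel : graph #|T| := Graph rel_adj_sym rel_adj_irr.

Lemma graph_of_rel_coloring :
  exists f : T -> 'I_(chi graph_of_rel), forall u v, r u v -> f u != f v.
Proof.
have [f /forallP f_proper] := chi_coloring graph_of_rel.
exists (fun u => f (enum_rank u)) => u v uv.
have /forallP/(_ (enum_rank v))/implyP := f_proper (enum_rank u); apply.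
by rewrite /= /rel_adj !enum_rankK.
Qed.

Definition in_biclique (B : {set T} * {set T}) (u v : T) :=
  ((u \in B.1) && (v \in B.2)) || ((u \in B.2) && (v \in B.1)).

Lemma in_bicliqueC B u v : in_biclique B u v = in_biclique B v u.
Proof. by rewrite /in_biclique orbC; congr orb; apply: andbC. Qed.

Lemma bp_graph_of_rel_le (K : finType) (F : K -> {set T} * {set T}) :
    (forall k, [disjoint (F k).1 & (F k).2]) ->
    (forall k u v, u \in (F k).1 -> v \in (F k).2 -> r u v) ->
    (forall u v, r u v -> #|[set k | in_biclique (F k) u v]| = 1) ->
  bp graph_of_rel <= #|K|.
Proof.
move=> F_disj F_edge F_part; apply: bp_le; apply/existsP.
pose lift (B : {set T} * {set T}) : {set 'I_#|T|} * {set 'I_#|T|} :=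
  ([set j | enum_val j \in B.1], [set j | enum_val j \in B.2]).
pose F' := [ffun i : 'I_#|K| => lift (F (enum_val i))].
exists F'; apply/andP; split.
  apply/forallP => i; rewrite /biclique ffunE; apply/andP; split.
    rewrite disjoints_subset; apply/subsetP => j.
    by rewrite !inE => /(disjointFr (F_disj _)) ->.
  apply/forall_inP => a; rewrite inE => ha; apply/forall_inP => b; rewrite inE.
  exact: F_edge.
apply/forallP => a; apply/forallP => b; apply/implyP => ab.
suff -> : [set i | in_bic (F' i) a b] =
          enum_rank @: [set k | in_biclique (F k) (enum_val a) (enum_val b)].
  by rewrite card_imset ?F_part //; exact: enum_rank_inj.
apply/setP => i; rewrite inE /in_bic ffunE !inE.
apply/idP/imsetP => [ab_i|[k]]; last by rewrite inE => ab_k ->; rewrite enum_rankK.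
by exists (enum_val i); rewrite ?inE ?enum_valK.
Qed.

End GraphOfRel.

Lemma Cov0_le_coloring t (h : cube t -> cube t -> bool) (K : finType)
    (col : cube t * cube t -> K) :
    (forall u v, ~~ h u.1 u.2 -> ~~ h v.1 v.2 -> col u = col v -> ~~ h u.1 v.2) ->
  Cov h false <= #|K|.
Proof.
move=> col_rect; apply: Cov_le; apply/existsP.
pose class k u := ~~ h u.1 u.2 && (col u == k).
pose F := [ffun i : 'I_#|K| => let k := enum_val i in
  ([set x | [exists y, class k (x, y)]], [set y | [exists x, class k (x, y)]])].
exists F; apply/andP; split.
- apply/forallP => i; apply/forall_inP => x; rewrite ffunE inE.
  case/existsP => y0; rewrite /class => /andP [hx /eqP cx].
  apply/forall_inP => y; rewrite inE.
  case/existsP => x1; rewrite /class => /andP [hy /eqP cy].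
  by apply/eqP/negbTE; apply: (col_rect (x, y0) (x1, y)) => //; rewrite cx cy.
- apply/subsetP => -[x y]; rewrite inE /= => /eqP hxy; apply/bigcupP.
  exists (enum_rank (col (x, y))) => //; rewrite /rect ffunE in_setX !inE enum_rankK.
  by apply/andP; split; apply/existsP; [exists y | exists x]; rewrite /class /= hxy eqxx.
Qed.

Section CrossGraphs.
Variables (t : nat) (h : cube t -> cube t -> bool).

Local Notation T := (cube t * cube t)%type.

Definition zero_entry (u : T) := ~~ h u.1 u.2.

Definition and_rel : rel T := fun u v =>
  [&& zero_entry u, zero_entry v, h u.1 v.2 & h v.1 u.2].

Lemma and_rel_sym : symmetric and_rel.
Proof. by move=> u v; rewrite /and_rel andbCA [h u.1 _ && _]andbC. Qed.

Lemma and_rel_irr : irreflexive and_rel.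
Proof. by move=> u; rewrite /and_rel /zero_entry; case: (h u.1 u.2); rewrite ?andbF. Qed.

Definition G_and := graph_of_rel and_rel_sym and_rel_irr.

Variables (k : nat) (col : T -> 'I_k).

Definition or_rel (a : 'I_k) : rel T := fun u v =>
  [&& zero_entry u, zero_entry v, col u == a, col v == a & h u.1 v.2 || h v.1 u.2].

Lemma or_rel_sym a : symmetric (or_rel a).
Proof.
move=> u v; rewrite /or_rel [RHS]andbCA; do 2 congr andb.
by rewrite [RHS]andbCA orbC.
Qed.

Lemma or_rel_irr a : irreflexive (or_rel a).
Proof. by move=> u; rewrite /or_rel /zero_entry; case: (h u.1 u.2); rewrite ?andbF. Qed.

Definition G_or a := graph_of_rel (or_rel_sym a) (or_rel_irr a).

Lemma or_rel_one_cross a u v :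
    (forall u v, and_rel u v -> col u != col v) ->
  or_rel a u v -> h u.1 v.2 -> ~~ h v.1 u.2.
Proof.
move=> col_proper /and5P [zu zv /eqP ua /eqP va _] uv; apply/negP => vu.
have := col_proper u v; rewrite /and_rel zu zv uv vu ua va eqxx.
by move=> /(_ isT).
Qed.

Lemma Cov0_le_chi_and_or : Cov h false <= k * \max_(a < k) chi (G_or a).
Proof.
set L := \max_(a < k) _.
have [g g_proper] :=
  fin_all_exists (fun a => graph_of_rel_coloring (or_rel_sym a) (or_rel_irr a)).
have chi_le u : chi (G_or (col u)) <= L := leq_bigmax (col u).
rewrite -[k]card_ord -[L]card_ord -card_prod.
apply: (Cov0_le_coloring (col := fun u => (col u, widen_ord (chi_le u) (g (col u) u)))).
move=> u v zu zv [cuv]; rewrite -cuv => guv; apply/negP => uv.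
have := g_proper (col u) u v.
rewrite /or_rel /zero_entry zu zv -cuv eqxx uv => /(_ isT).
by rewrite (val_inj guv) eqxx.
Qed.

End CrossGraphs.

Section BicliquePartitions.
Variables (t m : nat) (h : cube t -> cube t -> bool).
Variable R : 'I_m -> {set cube t} * {set cube t}.

Local Notation T := (cube t * cube t)%type.

Definition in_rect (i : 'I_m) x y := (x \in (R i).1) && (y \in (R i).2).

Hypothesis R_one : forall i x y, in_rect i x y -> h x y.
Hypothesis R_cover : forall x y, h x y -> exists i, in_rect i x y.
Hypothesis R_disj : forall i j x y, in_rect i x y -> in_rect j x y -> i = j.

Lemma in_rect_uniq x y : h x y -> exists i, forall j, in_rect j x y = (j == i).
Proof.
case/R_cover => i xyi; exists i => j.
by apply/idP/eqP => [/R_disj|->]; [apply|].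
Qed.

Lemma zero_entry_notin_rect i u : zero_entry h u -> in_rect i u.1 u.2 = false.
Proof. by apply: contraNF => /R_one ->. Qed.

Definition and_biclique (k : 'I_m * 'I_m) : {set T} * {set T} :=
  if k.1 < k.2 then
    ([set u | [&& zero_entry h u, u.1 \in (R k.1).1 & u.2 \in (R k.2).2]],
     [set v | [&& zero_entry h v, v.1 \in (R k.2).1 & v.2 \in (R k.1).2]])
  else (set0, set0).

Lemma in_and_biclique k u v : zero_entry h u -> zero_entry h v ->
  in_biclique (and_biclique k) u v =
  (k.1 < k.2) && (in_rect k.1 u.1 v.2 && in_rect k.2 v.1 u.2
                  || in_rect k.2 u.1 v.2 && in_rect k.1 v.1 u.2).
Proof.
move=> zu zv; rewrite /and_biclique /in_biclique /in_rect.
case: ifP => _ /=; last by rewrite !inE.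
rewrite !inE zu zv /=.
have swap a b c d : a && b && (c && d) = a && d && (c && b).
  by case: a b c d => [] [] [] [].
by congr orb; apply: swap.
Qed.

Lemma bp_G_and : bp (G_and h) <= m ^ 2.
Proof.
have -> : m ^ 2 = #|{: 'I_m * 'I_m}| by rewrite card_prod card_ord mulnn.
apply: (@bp_graph_of_rel_le _ _ _ _ _ and_biclique).
- move=> k; rewrite /and_biclique; case: ifP => _; last by rewrite -setI_eq0 set0I.
  rewrite disjoints_subset; apply/subsetP => u; rewrite !inE.
  case/and3P => zu u1 _; apply/negP => /and3P [_ _ u2].
  by move: (zero_entry_notin_rect k.1 zu); rewrite /in_rect u1 u2.
- move=> k u v; rewrite /and_biclique; case: ifP => _; last by rewrite inE.
  rewrite !inE => /and3P [zu u1 u2] /and3P [zv v1 v2].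
  by rewrite /and_rel zu zv (@R_one k.1) ?(@R_one k.2) /in_rect ?u1 ?v2 ?v1 ?u2.
move=> u v /and4P [zu zv uv vu].
have [i Ei] := in_rect_uniq uv; have [j Ej] := in_rect_uniq vu.
have ij : i != j.
  apply: contraNneq zu => ji; rewrite /zero_entry (@R_one i) //.
  by move: (Ei i) (Ej i); rewrite ji !eqxx /in_rect => /andP [-> _] /andP [_ ->].
rewrite -(card_sorted_pair ij); apply: eq_card => -[p q]; rewrite !inE.
by rewrite in_and_biclique // !Ei !Ej !xpair_eqE /= [(q == i) && _]andbC.
Qed.

Variables (k : nat) (col : T -> 'I_k).
Hypothesis col_proper : forall u v, and_rel h u v -> col u != col v.

Definition or_biclique (a : 'I_k) (i : 'I_m) : {set T} * {set T} :=
  ([set u | [&& zero_entry h u, col u == a & u.1 \in (R i).1]],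
   [set v | [&& zero_entry h v, col v == a & v.2 \in (R i).2]]).

Lemma bp_G_or a : bp (G_or h col a) <= m.
Proof.
rewrite -[m]card_ord; apply: (@bp_graph_of_rel_le _ _ _ _ _ (or_biclique a)).
- move=> i; rewrite disjoints_subset; apply/subsetP => u; rewrite !inE.
  case/and3P => zu _ u1; apply/negP => /and3P [_ _ u2].
  by move: (zero_entry_notin_rect i zu); rewrite /in_rect u1 u2.
- move=> i u v; rewrite !inE => /and3P [zu ua u1] /and3P [zv va v2].
  by rewrite /or_rel zu zv ua va (@R_one i) // /in_rect u1.
move=> u v; wlog uv : u v / h u.1 v.2 => [W e|e].
  case: (boolP (h u.1 v.2)) => [uv|nuv]; first exact: W.
  have vu : h v.1 u.2 by case/and5P: e => _ _ _ _; rewrite (negbTE nuv).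
  rewrite -(W v u vu); last by rewrite or_rel_sym.
  by apply: eq_card => i; rewrite !inE in_bicliqueC.
have [i0 Ei0] := in_rect_uniq uv.
have nvu := or_rel_one_cross col_proper e uv.
apply/eqP/cards1P; exists i0; apply/setP => i; rewrite !inE /in_biclique !inE.
case/and5P: e => zu zv ua va _; rewrite zu zv ua va /= -Ei0.
suff -> : (u.2 \in (R i).2) && (v.1 \in (R i).1) = false by rewrite orbF.
apply/negbTE; apply: contra nvu => /andP [u2 v1].
by apply: (@R_one i); rewrite /in_rect v1.
Qed.

End BicliquePartitions.

Lemma ucover_in_rect t (h : cube t -> cube t -> bool) m : ucoverable h true m ->
  exists R : 'I_m -> {set cube t} * {set cube t},
    [/\ forall i x y, in_rect R i x y -> h x y,
        forall x y, h x y -> exists i, in_rect R i x y &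
        forall i j x y, in_rect R i x y -> in_rect R j x y -> i = j].
Proof.
case/existsP => F /andP [/andP [/forallP mono cov] /forallP disj].
exists F; split.
- move=> i x y /andP [xi yi].
  by move/forall_inP: (mono i) => /(_ x xi) /forall_inP /(_ y yi) /eqP.
- move=> x y hxy; have /(subsetP cov) /bigcupP [i _] : (x, y) \in Defs.preim h true.
    by rewrite inE hxy.
  by rewrite in_setX; exists i.
- move=> i j x y /andP [xi yi] /andP [xj yj]; apply/eqP; apply: contraT => ij.
  have := disjointFr (implyP (forallP (disj i) j) ij) (x := (x, y)).
  by rewrite /rect !in_setX xi yi xj yj => /(_ isT).
Qed.

Theorem lemma3p5 (t : nat) (ht : 1 <= t) (h : cube t -> cube t -> bool)
    (c m : nat) (hc : Cov h false = c) (hm : UCov h true = m) :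
  exists n : nat, n <= 2 ^ (2 * t) /\
    exists G : graph n, bp G <= m ^ 2 /\ c <= chi G ^ 2.
Proof.
move: (UCov_ucoverable h true); rewrite hm => /ucover_in_rect [R [R_one R_cover R_disj]].
have [col col_proper] := graph_of_rel_coloring (and_rel_sym h) (and_rel_irr h).
have := Cov0_le_chi_and_or h col; rewrite hc.
set L := \max_(a < _) _ => c_le_kL.
exists #|{: cube t * cube t}|; split; first by rewrite card_cube_pairs.
case: (leqP L (chi (G_and h))) => [L_le_k|k_lt_L].
  exists (G_and h); split; first exact: bp_G_and R_one R_cover R_disj.
  by rewrite (leq_trans c_le_kL) // -mulnn leq_mul2l L_le_k orbT.
have [a La] : {a | L = chi (G_or h col a)}.
  apply: eq_bigmax; rewrite card_ord lt0n; apply: contraTneq k_lt_L => k0.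
  by rewrite /L big_pred0 // => -[a]; rewrite /= k0.
exists (G_or h col a); split.
  apply: leq_trans (bp_G_or R_one R_cover R_disj col_proper a) _.
  by case: (m) => // m'; rewrite -mulnn leq_pmulr.
by rewrite (leq_trans c_le_kL) // -La -mulnn leq_mul2r (ltnW k_lt_L) orbT.
Qed.
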